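(* Let $\mathcal{A}$ be a complete rpoNFA. Then $L(\mathcal{A})$ is $\mathrm{depth}(\mathcal{A})$-$\mathcal{R}$-trivial.
   Context: An NFA $\mathcal{A}=(Q,\Sigma,\cdot,I,F)$ with $\cdot:Q\times\Sigma\to 2^Q$ is complete if $q\cdot a\neq\emptyset$ for all $q\in Q$, $a\in\Sigma$. A poNFA is an NFA whose reachability relation ($p\le q$ iff $q\in p\cdot w$ for some word $w$) is a partial order; an rpoNFA is a poNFA such that for every state $q$ and letter $a$, $q\in q\cdot a$ implies $q\cdot a=\{q\}$. A path is simple if all its states are pairwise distinct; $\mathrm{depth}(\mathcal{A})$ is the number of input symbols on a longest simple path of $\mathcal{A}$ starting in an initial state. $\mathrm{sub}_k(v)$ is the set of subsequences (scattered subwords) of $v$ of length at most $k$; $u\sim_k v$ iff $\mathrm{sub}_k(u)=\mathrm{sub}_k(v)$; $x\sim^{\mathcal{R}}_k y$ iff every prefix of $x$ is $\sim_k$-equivalent to some prefix of $y$ and every prefix of $y$ is $\sim_k$-equivalent to some prefix of $x$. A language is $k$-$\mathcal{R}$-trivial if it is a union of $\sim^{\mathcal{R}}_k$-classes. *)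

From mathcomp Require Import all_boot.
Set Implicit Arguments. Unset Strict Implicit. Unset Printing Implicit Defensive.

Section NFA.
Variables (Q Sigma : finType) (delta : Q -> Sigma -> {set Q}).

Definition dstar (S : {set Q}) (w : seq Sigma) : {set Q} :=
  foldl (fun (S : {set Q}) a => \bigcup_(q in S) delta q a) S w.

Definition dst (p : Q) (w : seq Sigma) : {set Q} := dstar [set p] w.

Definition complete : Prop := forall q a, delta q a != set0.

Definition reach (p q : Q) : Prop := exists w, q \in dst p w.

(* reachability is always reflexive and transitive; being a partial order
   amounts to antisymmetry, which we write out together with the rest *)
Definition is_partial_order (R : Q -> Q -> Prop) : Prop :=
  (forall p, R p p) /\ (forall p q r, R p q -> R q r -> R p r) /\
  (forall p q, R p q -> R q p -> p = q).

Definition poNFA : Prop := is_partial_order reach.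

Definition rpoNFA : Prop :=
  poNFA /\ forall q a, q \in delta q a -> delta q a = [set q].

Definition accepts (I F : {set Q}) (w : seq Sigma) : bool :=
  dstar I w :&: F != set0.

(* a simple path with n input symbols starting in an initial state:
   states qs_0 ... qs_n pairwise distinct, letters w_0 ... w_{n-1},
   qs_{i+1} in qs_i . w_i *)
Definition has_simple_path (I : {set Q}) (n : nat) : bool :=
  [exists qs : n.+1.-tuple Q, exists w : n.-tuple Sigma,
     [&& tnth qs ord0 \in I, uniq qs &
         [forall i : 'I_n,
            tnth qs (lift ord0 i) \in delta (tnth qs (widen_ord (leqnSn n) i)) (tnth w i)]]].

(* a simple path has at most #|Q| states, hence fewer than #|Q| symbols *)
Definition depth (I : {set Q}) : nat :=
  \max_(n < #|Q|) (if has_simple_path I n then val n else 0).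

End NFA.

(* sub_k(v) = sub_k(u), written out: same subsequences of length <= k *)
Definition simk (Sigma : eqType) (k : nat) (u v : seq Sigma) : Prop :=
  forall x : seq Sigma, size x <= k -> subseq x u = subseq x v.

Definition simRk (Sigma : eqType) (k : nat) (x y : seq Sigma) : Prop :=
  (forall i, exists j, simk k (take i x) (take j y)) /\
  (forall j, exists i, simk k (take j y) (take i x)).

(* a language is a union of ~R_k classes: closed under ~R_k *)
Definition k_R_trivial (Sigma : eqType) (k : nat) (L : pred (seq Sigma)) : Prop :=
  forall x y, simRk k x y -> L x = L y.

From mathcomp Require Import all_boot.
Set Implicit Arguments. Unset Strict Implicit. Unset Printing Implicit Defensive.

(* Induct on a bound for the number of letters on simple paths from the
   current state q. Let that bound be k + 1 and x ~R_{k+1} y. Split x as u a v,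
   where the letters of u loop on q and a does not; in an rpoNFA, q . u = {q}.
   Corresponding prefixes of x and y contain the same letters, so y splits as
   u' a v' with the same letter a, and v ~R_k v'. Since reachability is a
   partial order, no state of q . a reaches q again, so simple paths from it
   have at most k letters and induction applies. If no letter of x leaves q,
   the same holds for y and both words stay in q; by completeness this is the
   only case when the bound is 0. *)

Section Words.
Variable T : eqType.
Implicit Types (a b : T) (u v x y : seq T).

Definition simk_prefixes k x y := forall i, exists j, simk k (take i x) (take j y).

Lemma all_or_split (P : pred T) x :
  all P x \/ exists u a v, [/\ x = u ++ a :: v, all P u & ~~ P a].
Proof.
elim: x => [|b x IH]; first by left.
case Pb: (P b); last by right; exists [::], b, x; rewrite Pb.
case: IH => [Px|[u [a [v [-> Pu Pa]]]]]; first by left; rewrite /= Pb.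
by right; exists (b :: u), a, v; rewrite /= Pb.
Qed.

Lemma all_notin (P : pred T) a u : all P u -> ~~ P a -> a \notin u.
Proof. by move=> Pu Pa; apply: contra Pa => /(allP Pu). Qed.

Lemma subseq_cons_cat a s u v :
  a \notin u -> subseq (a :: s) (u ++ a :: v) = subseq s v.
Proof.
elim: u => [|c u IH] /=; first by rewrite eqxx.
by rewrite inE negb_or => /andP[/negbTE-> /IH].
Qed.

Lemma simk_mem k x y : simk k.+1 x y -> x =i y.
Proof. by move=> xy a; rewrite -!sub1seq; apply: xy. Qed.

Lemma simk_cat_cons k a u v u' v' : a \notin u -> a \notin u' ->
  simk k.+1 (u ++ a :: v) (u' ++ a :: v') -> simk k v v'.
Proof.
move=> au au' xy s ks.
by rewrite -(subseq_cons_cat s v au) -(subseq_cons_cat s v' au'); apply: xy.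
Qed.

Lemma take_cat_cons_size a u v i :
  take (size u + i.+1) (u ++ a :: v) = u ++ a :: take i v.
Proof. by rewrite takeD take_size_cat // drop_size_cat. Qed.

Lemma take_cat_cons_mem b a u v j : b \notin u ->
  b \in take j (u ++ a :: v) -> exists m, take j (u ++ a :: v) = u ++ a :: take m v.
Proof.
move=> bu; rewrite take_cat; case: ifP => _.
  by move/mem_take/(negP bu).
case: (j - size u) => [|m] /=; last by exists m.
by rewrite cats0 => /(negP bu).
Qed.

Lemma simk_prefixes_all k (P : pred T) x y :
  simk_prefixes k.+1 y x -> all P x -> all P y.
Proof.
move=> yx /allP Px; have [j] := yx (size y); rewrite take_size => /simk_mem yxj.
by apply/allP => b /[!yxj] /mem_take /Px.
Qed.

Lemma simk_prefixes_cat_cons k a u v u' v' : a \notin u -> a \notin u' ->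
  simk_prefixes k.+1 (u ++ a :: v) (u' ++ a :: v') -> simk_prefixes k v v'.
Proof.
move=> au au' xy i; have [j] := xy (size u + i.+1); rewrite take_cat_cons_size.
move=> xyj; have aj : a \in take j (u' ++ a :: v').
  by rewrite -(simk_mem xyj) mem_cat mem_head orbT.
have [m em] := take_cat_cons_mem au' aj; rewrite em in xyj.
by exists m; apply: simk_cat_cons xyj.
Qed.

Lemma simk_prefixes_first k a b u v u' v' : a \notin u' -> b \notin u ->
  simk_prefixes k.+1 (u' ++ b :: v') (u ++ a :: v) -> a = b.
Proof.
move=> au' bu yx; have [j] := yx (size u' + 1).
rewrite take_cat_cons_size take0 => yxj.
have bj : b \in take j (u ++ a :: v) by rewrite -(simk_mem yxj) mem_cat mem_head orbT.
have [m em] := take_cat_cons_mem bu bj.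
have := simk_mem yxj a; rewrite em !mem_cat mem_head orbT (negbTE au').
by rewrite mem_seq1 => /eqP.
Qed.

Lemma simRk_all k (P : pred T) x y : simRk k.+1 x y -> all P x = all P y.
Proof.
by case=> xy yx; apply/idP/idP; [apply: simk_prefixes_all yx|apply: simk_prefixes_all xy].
Qed.

Lemma simRk_split k (P : pred T) a b u v u' v' :
  all P u -> ~~ P a -> all P u' -> ~~ P b ->
  simRk k.+1 (u ++ a :: v) (u' ++ b :: v') -> a = b /\ simRk k v v'.
Proof.
move=> Pu Pa Pu' Pb [xy yx].
have ab : a = b := simk_prefixes_first (all_notin Pu' Pa) (all_notin Pu Pb) yx.
move: xy yx; rewrite -ab => xy yx.
have [au au'] := (all_notin Pu Pa, all_notin Pu' Pa).
by split=> //; split; [apply: simk_prefixes_cat_cons xy|apply: simk_prefixes_cat_cons yx].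
Qed.

End Words.

Section Automaton.
Variables (Q Sigma : finType) (delta : Q -> Sigma -> {set Q}).
Implicit Types (p q r : Q) (S I F : {set Q}) (a : Sigma) (u v w : seq Sigma).

Lemma dstar_cat S u v : dstar delta S (u ++ v) = dstar delta (dstar delta S u) v.
Proof. exact: foldl_cat. Qed.

Lemma dstar_cons S a v :
  dstar delta S (a :: v) = dstar delta (\bigcup_(p in S) delta p a) v.
Proof. by []. Qed.

Lemma dstar1_cons q a v : dstar delta [set q] (a :: v) = dstar delta (delta q a) v.
Proof. by rewrite dstar_cons big_set1. Qed.

Lemma mem_dstar S v r :
  (r \in dstar delta S v) = [exists p in S, r \in dstar delta [set p] v].
Proof.
elim: v S => [|a v IH] S.
  apply/idP/existsP => [rS|[p /andP[pS /set1P-> //]]].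
  by exists r; rewrite rS set11.
rewrite dstar_cons IH; apply/existsP/existsP => [[p]|[q /andP[qS]]].
  case/andP=> /bigcupP[q qS pq] rp; exists q; rewrite qS dstar1_cons IH.
  by apply/existsP; exists p; rewrite pq.
rewrite dstar1_cons IH => /existsP[p /andP[pq rp]]; exists p; rewrite rp andbT.
by apply/bigcupP; exists q.
Qed.

Lemma accepts_exists S F v :
  accepts delta S F v = [exists p in S, accepts delta [set p] F v].
Proof.
apply/set0Pn/existsP => [[r /setIP[]]|[p /andP[pS /set0Pn[r /setIP[rp rF]]]]].
  rewrite mem_dstar => /existsP[p /andP[pS rp]] rF; exists p; rewrite pS.
  by apply/set0Pn; exists r; rewrite inE rp.
by exists r; rewrite inE rF andbT mem_dstar; apply/existsP; exists p; rewrite pS.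
Qed.

Lemma reach_refl p : reach delta p p.
Proof. by exists [::]; rewrite /dst /= set11. Qed.

Lemma reach_step p q a : q \in delta p a -> reach delta p q.
Proof. by exists [:: a]; rewrite /dst dstar1_cons. Qed.

Fixpoint run p (qs : seq Q) w : bool :=
  match qs, w with
  | [::], [::] => true
  | q :: qs', a :: w' => (q \in delta p a) && run q qs' w'
  | _, _ => false
  end.

Definition simple_path_bound q k :=
  forall qs w, run q qs w -> uniq (q :: qs) -> size w <= k.

Lemma run_size p qs w : run p qs w -> size qs = size w.
Proof. by elim: qs p w => [|q qs IH] p [|a w] //= /andP[_ /IH->]. Qed.

Lemma run_nth q0 a0 p qs w i : run p qs w -> i < size w ->
  nth q0 qs i \in delta (nth q0 (p :: qs) i) (nth a0 w i).
Proof.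
elim: qs p w i => [|q qs IH] p [|a w] [|i] //= /andP[pq qsw] Hi //.
exact: IH.
Qed.

Lemma simple_path_bound_depth I q : q \in I -> simple_path_bound q (depth delta I).
Proof.
move=> qI qs w qsw uqs; have sqs := run_size qsw.
have w_lt : size w < #|Q|.
  by rewrite -sqs -[_.+1]/(size (q :: qs)) -(card_uniqP uqs) max_card.
have simple : has_simple_path delta I (size w).
  have sqs1 : size (q :: qs) == (size w).+1 by rewrite /= sqs.
  apply/existsP; exists (Tuple sqs1); apply/existsP; exists (in_tuple w).
  rewrite (tnth_nth q) qI uqs; apply/forallP => i.
  rewrite !(tnth_nth q (Tuple sqs1)) (tnth_nth (tnth (in_tuple w) i)) lift0 /=.
  exact: run_nth qsw (ltn_ord i).
have := @leq_bigmax _ (fun n : 'I_#|Q| => if has_simple_path delta I n then val n else 0)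
  (Ordinal w_lt).
by rewrite /= simple.
Qed.

Section RpoNFA.
Hypothesis delta_complete : complete delta.
Hypothesis delta_po : poNFA delta.
Hypothesis delta_self_loop : forall q a, q \in delta q a -> delta q a = [set q].

Lemma run_reach p qs w r : run p qs w -> r \in p :: qs -> reach delta p r.
Proof.
elim: qs p w => [|q qs IH] p [|a w] //=.
  by move=> _ /[!inE] /eqP->; apply: reach_refl.
case/andP=> pq qsw /[!inE] /predU1P[->|rqs]; first exact: reach_refl.
exact: delta_po.2.1 _ _ _ (reach_step pq) (IH _ _ qsw rqs).
Qed.

Lemma dstar_loops q u :
  all (fun a => q \in delta q a) u -> dstar delta [set q] u = [set q].
Proof.
elim: u => [|a u IH] // /andP[qa qu].
by rewrite dstar1_cons delta_self_loop // IH.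
Qed.

Lemma simple_path_bound0_loop q a : simple_path_bound q 0 -> q \in delta q a.
Proof.
move=> bound; have /set0Pn[p pq] := delta_complete q a.
apply: contraT => qNa; have := bound [:: p] [:: a]; rewrite /= pq inE andbT.
by apply=> //; rewrite andbT; apply: contraNneq qNa => qp; rewrite {1}qp.
Qed.

(* Leaving q is irreversible in a poNFA, so q cannot occur again on the path. *)
Lemma simple_path_bound_step q a p k : simple_path_bound q k.+1 ->
  q \notin delta q a -> p \in delta q a -> simple_path_bound p k.
Proof.
move=> bound qNa pq qs w qsw uqs.
suff qNqs : q \notin p :: qs.
  by have := bound (p :: qs) (a :: w); rewrite /= pq qsw qNqs; apply.
apply: contra qNa => /(run_reach qsw) reach_pq.
by rewrite -{1}(delta_po.2.2 _ _ reach_pq (reach_step pq)).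
Qed.

Lemma simple_path_bound_k_R_trivial F k q :
  simple_path_bound q k -> k_R_trivial k (accepts delta [set q] F).
Proof.
elim: k q => [|k IH] q bound x y xy.
  have loops w : all (fun a => q \in delta q a) w.
    by apply/allP => a _; apply: simple_path_bound0_loop.
  by rewrite /accepts !dstar_loops.
pose P : pred Sigma := fun a => q \in delta q a.
have [Px|[u [a [v [ex Pu Pa]]]]] := all_or_split P x.
  have Py : all P y by rewrite -(simRk_all P xy).
  by rewrite /accepts !dstar_loops.
have [Py|[u' [b [v' [ey Pu' Pb]]]]] := all_or_split P y.
  by move: Py; rewrite -(simRk_all P xy) ex all_cat /= (negbTE Pa) andbF.
rewrite {}ex {}ey in xy *; have [<- vv'] := simRk_split Pu Pa Pu' Pb xy.
rewrite /accepts !dstar_cat (dstar_loops Pu) (dstar_loops Pu') !dstar1_cons.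
rewrite -/(accepts delta _ F v) -/(accepts delta _ F v') !accepts_exists.
apply: eq_existsb => p; apply: andb_id2l => pq.
exact: IH (simple_path_bound_step bound Pa pq) _ _ vv'.
Qed.

End RpoNFA.
End Automaton.

Theorem theorem4 (Q Sigma : finType) (delta : Q -> Sigma -> {set Q})
  (I F : {set Q}) :
  complete delta -> rpoNFA delta ->
  k_R_trivial (depth delta I) (accepts delta I F).
Proof.
move=> complete_delta [po self_loop] x y xy; rewrite !accepts_exists.
apply: eq_existsb => q; apply: andb_id2l => qI.
exact: simple_path_bound_k_R_trivial complete_delta po self_loop _ _ _
  (simple_path_bound_depth qI) _ _ xy.
Qed.
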